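(* Let $\sigma=(a_1,\ldots,a_s)$ be a partition of $r$ with $a_1\ge\cdots\ge a_s$, let $H=H(n,r,q\mid\sigma)$, and let $M$ be a maximum matching in $H$. Then there is a matching $M_c$ in $H$ with $|M_c|=|M|$ (hence also maximum) such that: (1) for every edge $E\in M_c$ and every class $V_i$ with $E\cap V_i\neq\emptyset$, the vertices of $E\cap V_i$ are consecutive in $V_i$; and (2) in each class $V_i$, the vertices not covered by $M_c$ are consecutive and lie at the top or at the bottom of $V_i$.
   Context: A $\sigma$-hypergraph $H=H(n,r,q\mid\sigma)$, for a partition $\sigma$ of $r$, is the $r$-uniform hypergraph whose vertex set is the disjoint union of $n$ classes $V_1,\ldots,V_n$, each of size $q$; an $r$-subset $K$ of vertices is an edge iff the multiset of non-zero values $|K\cap V_i|$ equals $\sigma$. The vertices of each class are ordered $V_i=\{v_{1,i},v_{2,i},\ldots,v_{q,i}\}$; a set of vertices of $V_i$ is consecutive if it is of the form $\{v_{j,i},v_{j+1,i},\ldots,v_{j+m,i}\}$; the top $k$ vertices of $V_i$ are $v_{1,i},\ldots,v_{k,i}$ and the bottom $k$ vertices are $v_{q-k+1,i},\ldots,v_{q,i}$. A matching is a set of pairwise vertex-disjoint edges; a maximum matching is one of largest size. *)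

From mathcomp Require Import all_boot.
Set Implicit Arguments. Unset Strict Implicit. Unset Printing Implicit Defensive.

(* Vertices of H(n,r,q|sigma): pairs (i, j) meaning v_{j+1, i+1}
   (class i : 'I_n, position j : 'I_q, 0-based, position 0 = top). *)
Notation vtx n q := ('I_n * 'I_q)%type.

Section Sigma.
Variables (n q r : nat) (sigma : seq nat).

Definition cls (i : 'I_n) : {set vtx n q} := [set v : vtx n q | v.1 == i].

Definition is_partition : Prop :=
  [/\ sorted geq sigma, all (fun a => 0 < a) sigma & sumn sigma = r].

Definition is_edge (K : {set vtx n q}) : Prop :=
  #|K| = r /\
  perm_eq [seq #|K :&: cls i| | i <- enum 'I_n & 0 < #|K :&: cls i|] sigma.

Definition is_matching (M : {set {set vtx n q}}) : Prop :=
  (forall E, E \in M -> is_edge E) /\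
  (forall E F, E \in M -> F \in M -> E != F -> [disjoint E & F]).

Definition is_max_matching (M : {set {set vtx n q}}) : Prop :=
  is_matching M /\ (forall M', is_matching M' -> #|M'| <= #|M|).

Definition covered (M : {set {set vtx n q}}) : {set vtx n q} :=
  \bigcup_(E in M) E.

Definition consecutive (i : 'I_n) (S : {set vtx n q}) : Prop :=
  exists a b : 'I_q, a <= b /\ S = [set v : vtx n q | (v.1 == i) && (a <= v.2 <= b)].

Definition top_k (i : 'I_n) (k : nat) : {set vtx n q} :=
  [set v : vtx n q | (v.1 == i) && (v.2 < k)].
Definition bottom_k (i : 'I_n) (k : nat) : {set vtx n q} :=
  [set v : vtx n q | (v.1 == i) && (q - k <= v.2)].

End Sigma.

From mathcomp Require Import all_boot zify.
Set Implicit Arguments. Unset Strict Implicit. Unset Printing Implicit Defensive.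

(* Enumerate the edges of M as E_0, ..., E_(m-1) and replace E_k by the set
   that, in each class V_i, consists of the next |E_k ∩ V_i| positions after
   those already used by E_0, ..., E_(k-1).  The new sets have the same class
   profiles as the old ones, hence are edges; they are pairwise disjoint and
   meet every class in an interval; and since the old edges were disjoint the
   intervals fit into the class, leaving exactly its bottom vertices uncovered.
   Neither the maximality of M nor the shape of sigma plays a role. *)

Lemma card_cls_slice n q (i : 'I_n) (P : pred 'I_q) :
  #|[set v : vtx n q | (v.1 == i) && P v.2]| = #|[set j : 'I_q | P j]|.
Proof.
have -> : [set v : vtx n q | (v.1 == i) && P v.2] = (pair i) @: [set j | P j].
  apply/setP => [[i' j]]; rewrite !inE /=; apply/idP/imsetP.
    by case/andP => /eqP -> Pj; exists j; rewrite ?inE.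
  by case=> j' Pj [-> ->]; rewrite eqxx; rewrite inE in Pj.
by rewrite card_imset // => a b [].
Qed.

Lemma card_cls n q (i : 'I_n) : #|cls q i| = q.
Proof.
have -> : cls q i = [set v : vtx n q | (v.1 == i) && predT v.2].
  by apply/setP => v; rewrite !inE andbT.
by rewrite card_cls_slice -[RHS]card_ord; apply: eq_card => j; rewrite inE.
Qed.

Lemma card_ord_interval q a c :
  a + c <= q -> #|[set j : 'I_q | a <= j < a + c]| = c.
Proof.
move=> acq; rewrite -sum1_card.
transitivity (\sum_(0 <= j < q | a <= j < a + c) 1).
  by rewrite big_mkord; apply: eq_bigl => j; rewrite inE.
rewrite sum1_count /index_iota subn0.
have -> : q = a + (c + (q - (a + c))) by lia.
rewrite !iotaD !count_cat /=.
rewrite (@eq_in_count _ _ pred0 (iota 0 a)); last by move=> x; rewrite mem_iota /=; lia.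
rewrite (@eq_in_count _ _ predT (iota (0 + a) c)); last by move=> x; rewrite mem_iota /=; lia.
rewrite (@eq_in_count _ _ pred0 (iota (0 + a + c) _)); last by move=> x; rewrite mem_iota /=; lia.
by rewrite !count_pred0 count_predT size_iota addn0.
Qed.

Lemma consecutive_interval n q (i : 'I_n) a c : 0 < c -> a + c <= q ->
  consecutive i [set v : vtx n q | (v.1 == i) && (a <= v.2 < a + c)].
Proof.
move=> c_gt0 acq.
have a_lt : a < q by lia.
have b_lt : a + c - 1 < q by lia.
exists (Ordinal a_lt), (Ordinal b_lt); split => /=; first by lia.
apply/setP => v; rewrite !inE; case: (v.1 == i) => //=.
by apply/idP/idP; lia.
Qed.

Lemma card_sum_cls n q (K : {set vtx n q}) :
  #|K| = \sum_(i : 'I_n) #|K :&: cls q i|.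
Proof.
rewrite -sum1_card (partition_big (fun v : vtx n q => v.1) predT) //=.
apply: eq_bigr => i _; rewrite -sum1_card; apply: eq_bigl => v.
by rewrite !inE eq_sym.
Qed.

Lemma is_edge_cls_profile n q r sigma (A B : {set vtx n q}) :
  (forall i, #|A :&: cls q i| = #|B :&: cls q i|) ->
  is_edge r sigma A -> is_edge r sigma B.
Proof.
move=> eAB [cardA profA]; split.
  by rewrite card_sum_cls -(eq_bigr _ (fun i _ => eAB i)) -card_sum_cls.
rewrite -(eq_filter (a1 := fun i => 0 < #|A :&: cls q i|)); last by move=> i; rewrite eAB.
by rewrite -(eq_map eAB).
Qed.

Section Compaction.
Variables (n q : nat) (s : seq {set vtx n q}).

Definition part k (i : 'I_n) := #|nth set0 s k :&: cls q i|.
Definition offset k i := \sum_(0 <= l < k) part l i.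
Definition block k : {set vtx n q} :=
  [set v : vtx n q | offset k v.1 <= v.2 < offset k v.1 + part k v.1].

Lemma offsetS k i : offset k.+1 i = offset k i + part k i.
Proof. by rewrite /offset big_nat_recr. Qed.

Lemma leq_offset k l i : k <= l -> offset k i <= offset l i.
Proof. by move=> kl; rewrite /offset (@big_cat_nat _ _ _ k 0 l) //= leq_addr. Qed.

Lemma block_end_le_offset k l i : k < l -> offset k i + part k i <= offset l i.
Proof. by move=> kl; rewrite -offsetS leq_offset. Qed.

Lemma block_cls k i : block k :&: cls q i =
  [set v : vtx n q | (v.1 == i) && (offset k i <= v.2 < offset k i + part k i)].
Proof. by apply/setP => v; rewrite !inE andbC; case: eqP => // ->. Qed.

Lemma disjoint_block k l : k < l -> [disjoint block k & block l].
Proof.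
move=> kl; rewrite -setI_eq0; apply/eqP/setP => v; rewrite !inE.
apply/negbTE/negP => /and3P[/andP[_ vk] lv _].
by have := leq_trans vk (leq_trans (block_end_le_offset v.1 kl) lv); rewrite ltnn.
Qed.

Lemma disjoint_block_neq k l : k != l -> [disjoint block k & block l].
Proof. by rewrite neq_ltn => /orP[] lt; [|rewrite disjoint_sym]; apply: disjoint_block. Qed.

Lemma mem_blocks K i (j : 'I_q) :
  (exists2 k, k < K & (i, j) \in block k) <-> j < offset K i.
Proof.
elim: K => [|K IH]; first by rewrite /offset big_geq //; split=> [[]|].
rewrite offsetS; split.
  case=> k; rewrite ltnS leq_eqVlt => /orP[/eqP -> | kK] jk.
    by move: jk; rewrite inE => /andP[].
  by rewrite ltn_addr //; apply/IH; exists k.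
case: (ltnP j (offset K i)) => [jK _ | Kj jK].
  by have [k kK jk] := IH.2 jK; exists k => //; apply: ltnW.
by exists K => //; rewrite inE /= Kj jK.
Qed.

Hypothesis s_disjoint :
  forall k l, k < l < size s -> [disjoint nth set0 s k & nth set0 s l].

Lemma offset_size_le i : offset (size s) i <= q.
Proof.
pose F (l : 'I_(size s)) := nth set0 s l :&: cls q i.
have disjF a b : a != b -> [disjoint F a & F b].
  move=> ab; rewrite /F; apply: (disjointW (subsetIl _ _) (subsetIl _ _)).
  have [lt|lt|eq] := ltngtP a b.
  - by apply: s_disjoint; rewrite lt ltn_ord.
  - by rewrite disjoint_sym; apply: s_disjoint; rewrite lt ltn_ord.
  - by rewrite (val_inj eq) eqxx in ab.
have := partition_disjoint_bigcup addn (fun _ => 1) disjF.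
rewrite sum1_card => cardF.
have : #|\bigcup_l F l| <= #|cls q i|.
  by apply: subset_leq_card; apply/bigcupsP => l _; apply: subsetIr.
rewrite card_cls cardF /offset big_mkord; apply: leq_trans.
by under [X in _ <= X]eq_bigr do rewrite sum1_card.
Qed.

Lemma block_end_le k i : k < size s -> offset k i + part k i <= q.
Proof. by move=> ks; apply: leq_trans (offset_size_le i); apply: block_end_le_offset. Qed.

Lemma card_block_cls k i : k < size s -> #|block k :&: cls q i| = part k i.
Proof.
move=> ks; rewrite block_cls.
rewrite (card_cls_slice i (fun j : 'I_q => offset k i <= j < offset k i + part k i)).
by rewrite card_ord_interval ?block_end_le.
Qed.

Lemma consecutive_block_cls k i : k < size s ->
  block k :&: cls q i != set0 -> consecutive i (block k :&: cls q i).
Proof.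
move=> ks; rewrite -card_gt0 card_block_cls // => part_gt0.
by rewrite block_cls; apply: consecutive_interval; rewrite ?block_end_le.
Qed.

Lemma setD_cls_blocks i :
  cls q i :\: \bigcup_(k < size s) block k = bottom_k q i (q - offset (size s) i).
Proof.
apply/setP => [[i' j]]; rewrite !inE /=; case: eqP => [-> | _]; rewrite ?andbT ?andbF //.
rewrite subKn ?offset_size_le // leqNgt; congr (~~ _).
apply/bigcupP/idP => [[k _ jk] | /mem_blocks[k ks jk]].
  by apply/mem_blocks; exists k.
by exists (Ordinal ks).
Qed.

Lemma block_eq0 k : k < size s -> block k = set0 -> nth set0 s k = set0.
Proof.
move=> ks blk0; apply/eqP; rewrite -cards_eq0 card_sum_cls.
rewrite -(eq_bigr _ (fun i _ => card_block_cls i ks)) -card_sum_cls.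
by rewrite blk0 cards0.
Qed.

(* Blocks with distinct indices are disjoint, so equal ones are empty and stem
   from two copies of set0 in s. *)
Lemma block_inj k l : uniq s -> k < size s -> l < size s ->
  block k = block l -> k = l.
Proof.
move=> s_uniq ks ls blk_kl; case: (eqVneq k l) => // kl.
have blk0 : block k = set0.
  have := disjoint_block_neq kl.
  by rewrite -blk_kl -setI_eq0 setIid => /eqP.
have blk0' : block l = set0 by rewrite -blk_kl.
move: kl; rewrite -(nth_uniq set0 ks ls s_uniq).
by rewrite (block_eq0 ks blk0) (block_eq0 ls blk0') eqxx.
Qed.

End Compaction.

Theorem lemma3p1 (n r q : nat) (sigma : seq nat)
  (Hsigma : is_partition r sigma)
  (M : {set {set vtx n q}})
  (HM : is_max_matching r sigma M) :
  exists Mc : {set {set vtx n q}},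
    [/\ is_matching r sigma Mc,
        #|Mc| = #|M|,
        (forall E, E \in Mc -> forall i : 'I_n,
            E :&: cls q i != set0 -> consecutive i (E :&: cls q i))
      & (forall i : 'I_n, exists k : nat,
            cls q i :\: covered Mc = top_k q i k \/
            cls q i :\: covered Mc = bottom_k q i k)].
Proof.
case: HM => [[M_edge M_disj] _]; set s := enum M.
have s_M k : k < size s -> nth set0 s k \in M by move=> ks; rewrite -mem_enum mem_nth.
have s_disj k l : k < l < size s -> [disjoint nth set0 s k & nth set0 s l].
  move=> /andP[kl ls]; have ks := ltn_trans kl ls.
  by apply: M_disj; rewrite ?s_M ?nth_uniq ?enum_uniq // neq_ltn kl.
pose N (k : 'I_(size s)) := block s k.
exists (N @: setT); split.
- split=> [_ /imsetP[k _ ->] | _ _ /imsetP[k _ ->] /imsetP[l _ ->] kl].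
    apply: is_edge_cls_profile (M_edge _ (s_M _ (ltn_ord k))) => i.
    by rewrite card_block_cls.
  by apply: disjoint_block_neq; apply: contraNneq kl => /val_inj ->.
- rewrite card_imset ?cardsT ?card_ord ?cardE // => k l.
  by move/(block_inj s_disj (enum_uniq _) (ltn_ord k) (ltn_ord l))/val_inj.
- by move=> _ /imsetP[k _ ->] i; apply: consecutive_block_cls.
- move=> i; exists (q - offset s (size s) i); right.
  rewrite /covered big_imset_idem; last exact: setUid.
  by rewrite -(setD_cls_blocks s_disj); congr (_ :\: _); apply: eq_bigl => k; rewrite inE.
Qed.
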